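(* Let $n\ge2$, $0\le m\le n(n-1)$ and $\nu=\lfloor \frac{m}{n}\rfloor$. Then $\mathbb G(n,m)$ is almost regular, with $n(\nu+1)-m$ vertices of in-degree $\nu$ and $m-n\nu$ vertices of in-degree $\nu+1$; more precisely, writing $d_i$ for the in-degree of vertex $i$, $(d_1,\dots,d_n)=(\nu,\dots,\nu,\nu+1,\dots,\nu+1)$, where $\nu$ appears $n(\nu+1)-m$ times followed by $\nu+1$ appearing $m-n\nu$ times.
   Context: For integers $n\ge2$ and $0\le m\le n(n-1)$, $\mathbb G(n,m)$ is the simple directed graph on vertex set $\{1,\dots,n\}$ whose arc set is $\{(\lceil \frac{i}{n-1}\rceil,\ n-((i-1)\bmod n)) : i=1,\dots,m\}$, where an arc $(j,k)$ goes from $j$ to $k$ and $a\bmod b\in\{0,\dots,b-1\}$; these $m$ pairs are pairwise distinct pairs of distinct vertices. A directed graph is almost regular if the difference between its largest and smallest in-degree is at most $1$. *)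

From mathcomp Require Import all_boot.
Set Implicit Arguments. Unset Strict Implicit. Unset Printing Implicit Defensive.

Definition ceil_div (a b : nat) : nat := (a + b.-1) %/ b.

(* The arc (as a pair (tail, head)) with index i of G(n,m). *)
Definition Garc (n i : nat) : nat * nat :=
  (ceil_div i (n - 1), n - ((i - 1) %% n)).

Definition Garcs (n m : nat) : seq (nat * nat) := [seq Garc n i | i <- iota 1 m].

Definition indeg (n m k : nat) : nat := count (fun a => a.2 == k) (Garcs n m).

Definition almost_regular (n m : nat) : Prop :=
  forall j k, j \in iota 1 n -> k \in iota 1 n -> indeg n m j <= indeg n m k + 1.

(* The tail of an arc is irrelevant to in-degrees: the heads of arcs 1, 2, 3, ...
   run cyclically through n, n-1, ..., 1.  Among the first m arcs every vertex is
   therefore hit m %/ n times by the complete cycles, and the m %% n arcs of the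
   last incomplete cycle hit the top m %% n vertices once more. *)

From mathcomp Require Import all_boot.
From mathcomp Require Import zify.

Lemma indeg_count_heads n m k :
  indeg n m k = count (fun i => n - (i - 1) %% n == k) (iota 1 m).
Proof. by rewrite /indeg /Garcs count_map. Qed.

Lemma dvdnS_mod m d : 0 < d -> (d %| m.+1) = ((m %% d).+1 == d).
Proof.
move=> d_gt0; rewrite /dvdn -addn1 -modnDml addn1.
have : (m %% d).+1 <= d by rewrite ltn_mod.
rewrite leq_eqVlt => /orP[/eqP-> | lt_d]; first by rewrite modnn !eqxx.
by rewrite modn_small // (ltn_eqF lt_d).
Qed.

Lemma count_heads_iota n m k : 0 < k <= n ->
  count (fun i => n - (i - 1) %% n == k) (iota 1 m) = m %/ n + (n - k < m %% n).
Proof.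
move=> k_range; have n_gt0 : 0 < n by case/andP: k_range; apply: leq_trans.
elim: m => [|m IHm]; first by rewrite div0n mod0n.
rewrite -(addn1 m) iotaD count_cat IHm /= addKn addn0 addn1.
rewrite divnS // modnS dvdnS_mod //; move: (m %/ n) (m %% n) => q r {IHm}.
by case: (r.+1 =P n) => cycle_ends; rewrite /= ?ltn0; lia.
Qed.

Lemma indegE n m k : 0 < k <= n -> indeg n m k = m %/ n + (n - k < m %% n).
Proof. by move=> k_range; rewrite indeg_count_heads count_heads_iota. Qed.

Lemma map_const_in {T U : eqType} (f : T -> U) (c : U) (s : seq T) :
  {in s, forall x, f x = c} -> [seq f x | x <- s] = nseq (size s) c.
Proof.
move=> f_c; rewrite -(size_map f); apply/all_pred1P.
by apply/allP => y /mapP[x s_x ->]; rewrite /= f_c.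
Qed.

Lemma map_threshold_iota (f : nat -> nat) n r a :
  r <= n -> (forall k, 0 < k <= n -> f k = a + (n - k < r)) ->
  [seq f k | k <- iota 1 n] = nseq (n - r) a ++ nseq r a.+1.
Proof.
move=> le_rn f_val.
have -> : iota 1 n = iota 1 (n - r) ++ iota (1 + (n - r)) r.
  by rewrite -iotaD subnK.
rewrite map_cat (map_const_in f a) ?(map_const_in f a.+1) ?size_iota // => k;
  by rewrite mem_iota => k_range; rewrite f_val; lia.
Qed.

Lemma map_indeg_iota n m : 0 < n ->
  [seq indeg n m k | k <- iota 1 n] =
    nseq (n - m %% n) (m %/ n) ++ nseq (m %% n) (m %/ n).+1.
Proof.
move=> n_gt0; apply: map_threshold_iota => [|k]; last exact: indegE.
by rewrite ltnW // ltn_mod.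
Qed.

Lemma almost_regular_Garcs n m : almost_regular n m.
Proof.
move=> j k; rewrite !mem_iota => j_range k_range.
rewrite !indegE; [|lia|lia].
by rewrite -addnA leq_add2l (leq_trans (leq_b1 _) (leq_addl _ _)).
Qed.

Theorem proposition2 (n m : nat) (hn : 2 <= n) (hm : m <= n * (n - 1)) :
  let nu := m %/ n in
  [/\ almost_regular n m,
      count (fun k => indeg n m k == nu) (iota 1 n) = n * (nu + 1) - m,
      count (fun k => indeg n m k == nu + 1) (iota 1 n) = m - n * nu &
      [seq indeg n m k | k <- iota 1 n] =
        nseq (n * (nu + 1) - m) nu ++ nseq (m - n * nu) (nu + 1)].
Proof.
(* The bound hm only guarantees that the arcs are distinct; the in-degrees do not need it. *)
move=> nu.
have n_gt0 : 0 < n by apply: ltnW.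
have low_count : n * (nu + 1) - m = n - m %% n by rewrite /nu; lia.
have high_count : m - n * nu = m %% n by rewrite /nu; lia.
have degrees : [seq indeg n m k | k <- iota 1 n] =
    nseq (n - m %% n) nu ++ nseq (m %% n) nu.+1 := map_indeg_iota n m n_gt0.
rewrite low_count high_count addn1 -degrees.
split; [exact: almost_regular_Garcs | | | by []].
- rewrite -(count_map _ (pred1 nu)) degrees count_cat !count_nseq /=.
  by rewrite eqxx (gtn_eqF (ltnSn nu)) mul1n mul0n addn0.
- rewrite -(count_map _ (pred1 nu.+1)) degrees count_cat !count_nseq /=.
  by rewrite eqxx (ltn_eqF (ltnSn nu)) mul1n mul0n.
Qed.
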